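(* Let $\Bbbk$ be a field with $\mathrm{char}(\Bbbk)\neq2$, $n\ge2$, $\mathbb{H}_{2^n}$ the Nichols Hopf algebra and $A$ a unital associative $\Bbbk$-algebra. Every partial action $\cdot$ of $\mathbb{H}_{2^n}$ on $A$ such that either $g\cdot1_A=1_A$, or $g\cdot 1_A=0$ and $x_i\cdot 1_A\in Z(A)$ for all $i\in\{1,\dots,n-1\}$, is symmetric, i.e. satisfies $h\cdot(k\cdot a)=(h_1k\cdot a)(h_2\cdot1_A)$ for all $h,k\in\mathbb{H}_{2^n}$, $a\in A$.
   Context: $\mathbb{H}_{2^n}$ is the Hopf algebra generated by $g,x_1,\dots,x_{n-1}$ with relations $g^2=1$, $x_i^2=0$, $x_ig=-gx_i$, $x_ix_j=-x_jx_i$; it has basis $\{g^{j_0}x_1^{j_1}\cdots x_{n-1}^{j_{n-1}}:j_i\in\{0,1\}\}$, with $\Delta(g)=g\otimes g$, $\varepsilon(g)=1$, $\Delta(x_i)=x_i\otimes1+g\otimes x_i$, $\varepsilon(x_i)=0$, $S(g)=g$, $S(x_i)=-gx_i$. $Z(A)$ is the center of $A$. For a bialgebra $H$ with $\Delta(h)=h_1\otimes h_2$, a partial action of $H$ on $A$ is a linear map $\cdot:H\otimes A\to A$ with $1_H\cdot a=a$, $h\cdot(ab)=(h_1\cdot a)(h_2\cdot b)$ and $h\cdot(k\cdot a)=(h_1\cdot1_A)(h_2k\cdot a)$ for all $h,k\in H$, $a,b\in A$. *)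

From HB Require Import structures.
From mathcomp Require Import all_boot all_order all_algebra.
Set Implicit Arguments. Unset Strict Implicit. Unset Printing Implicit Defensive.
Import Order.TTheory GRing.Theory Num.Theory.
Local Open Scope ring_scope.

(* The Nichols Hopf algebra H_{2^n}, generated by g, x_1, ..., x_{n-1}.
   The generator x_i (1 <= i <= n-1) is indexed by the ordinal i-1 : 'I_(n.-1)
   (the order of indices is preserved).  The basis element
   g^{j_0} x_{i_1} ... x_{i_k} (i_1 < ... < i_k) is indexed by
   (j_0, {i_1,...,i_k}) : bool * {set 'I_(n.-1)}.  An element of H_{2^n}
   is its coordinate function on this basis. *)

Notation Hidx n := (bool * {set 'I_n.-1})%type.
Notation Hn K n := {ffun Hidx n -> K^o}.

Section Nichols.
Variables (K : fieldType) (n : nat).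

Definition sgn (k : nat) : K := (-1) ^+ k.

Definition hb (b : Hidx n) : Hn K n := [ffun c => (c == b)%:R].

Definition cross (S T : {set 'I_n.-1}) : nat :=
  #|[set p : 'I_n.-1 * 'I_n.-1 | [&& p.1 \in S, p.2 \in T & (p.2 < p.1)%N]]|.

(* (g^a x_S)(g^b x_T) = (-1)^{b|S|} g^{a+b} x_S x_T, and
   x_S x_T = 0 if S, T meet, (-1)^{cross S T} x_{S u T} otherwise *)
Definition hbmul (u v : Hidx n) : Hn K n :=
  if [disjoint u.2 & v.2] then
    sgn (v.1 * #|u.2| + cross u.2 v.2) *: hb (u.1 (+) v.1, u.2 :|: v.2)
  else 0.

Definition hmul (h k : Hn K n) : Hn K n :=
  \sum_(u : Hidx n) \sum_(v : Hidx n) (h u * k v) *: hbmul u v.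

Definition H1 : Hn K n := hb (false, set0).
Definition Hg : Hn K n := hb (true, set0).
Definition Hx (i : 'I_n.-1) : Hn K n := hb (false, [set i]).

(* Comultiplication: Delta(x_i) = x_i (x) 1 + g (x) x_i, Delta(g) = g (x) g,
   multiplicatively extended:
   Delta(g^a x_S) = sum_{T subset S} (-1)^{cross T (S\T)} g^{a+|T|} x_{S\T} (x) g^a x_T.
   Sweedler sum: hsum h F = sum F(h_1, h_2), for F bilinear. *)
Definition hsum (V : lmodType K) (h : Hn K n) (F : Hn K n -> Hn K n -> V) : V :=
  \sum_(u : Hidx n) \sum_(T in powerset u.2)
     (h u * sgn (cross T (u.2 :\: T))) *:
       F (hb (u.1 (+) odd #|T|, u.2 :\: T)) (hb (u.1, T)).

Section Action.
Variable (A : algType K).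

(* a linear map H (x) A -> A, given as a bilinear map *)
Definition bilinear_act (act : Hn K n -> A -> A) :=
  (forall (c : K) h1 h2 a, act (c *: h1 + h2) a = c *: act h1 a + act h2 a) /\
  (forall (c : K) h a b, act h (c *: a + b) = c *: act h a + act h b).

Definition partial_action (act : Hn K n -> A -> A) :=
  [/\ bilinear_act act,
      (forall a, act H1 a = a),
      (forall h a b, act h (a * b) = hsum h (fun h1 h2 => act h1 a * act h2 b)) &
      (forall h k a, act h (act k a) =
         hsum h (fun h1 h2 => act h1 1 * act (hmul h2 k) a))].

Definition symmetric_partial_action (act : Hn K n -> A -> A) :=
  forall h k a, act h (act k a) =
    hsum h (fun h1 h2 => act (hmul h1 k) a * act h2 1).

Definition central (z : A) := forall b : A, z * b = b * z.

End Action.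
End Nichols.

From HB Require Import structures.
From mathcomp Require Import all_boot all_order all_algebra.
Set Implicit Arguments. Unset Strict Implicit. Unset Printing Implicit Defensive.
Import GRing.Theory.
Local Open Scope ring_scope.

(* If g·1 = 1, then x_i·1 = x_i·(1 1) = (x_i·1)(1·1) + (g·1)(x_i·1) = 2 (x_i·1)
   forces x_i·1 = 0; the action is then global with h·1 = ε(h) 1, so both
   h·(k·a) and Σ (h_1 k·a)(h_2·1) equal hk·a.
   If g·1 = 0 and the x_i·1 are central, then g acts by 0, x_i and g x_i both
   act as multiplication by x_i·1, and g^c x_S acts by 0 once |S| ≥ 2.  Hence
   h·a = (h·1) a with h·1 central, and symmetry reduces to the identity
   Σ (h_1 k·1)(h_2·1) = (h·1)(k·1), checked on basis elements h = g^c x_S: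
   for |S| = 2 the two surviving terms cancel because exactly one of
   cross {i} {j} and cross {j} {i} is 1. *)

Lemma set0_set1_or_card_gt1 (T : finType) (U : {set T}) :
  [\/ U = set0, exists i, U = [set i] | (1 < #|U|)%N].
Proof.
case: (ltngtP #|U| 1) => [|gt1|/eqP/cards1P U1];
  [constructor 1|by constructor 3|by constructor 2].
by apply/eqP; rewrite -cards_eq0 -leqn0.
Qed.

Section NicholsBasis.
Variables (K : fieldType) (n : nat).
Local Notation I := (Hidx n).
Local Notation H := (Hn K n).

Lemma hn_expand (h : H) : h = \sum_u h u *: hb K u.
Proof.
apply/ffunP => x; rewrite sum_ffunE (bigD1 x) //= big1 ?addr0.
  by rewrite !ffunE eqxx -[RHS]/(h x * 1) mulr1.
by move=> u /negbTE ux; rewrite !ffunE eq_sym ux -[LHS]/(h u * 0) mulr0.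
Qed.

Lemma sum_hb_coord (V : lmodType K) (F : I -> V) (u : I) :
  \sum_v hb K u v *: F v = F u.
Proof.
rewrite (bigD1 u) //= big1 ?addr0; first by rewrite ffunE eqxx scale1r.
by move=> v /negbTE vu; rewrite ffunE vu scale0r.
Qed.

Lemma hmul_hbl (u : I) (k : H) : hmul (hb K u) k = \sum_v k v *: hbmul K u v.
Proof.
rewrite /hmul (bigD1 u) //= [X in _ + X]big1 ?addr0.
  by apply: eq_bigr => v _; rewrite ffunE eqxx mul1r.
by move=> w /negbTE wu; rewrite big1 // => v _; rewrite ffunE wu mul0r scale0r.
Qed.

Lemma hmul_hb (u v : I) : hmul (hb K u) (hb K v) = hbmul K u v.
Proof. by rewrite hmul_hbl sum_hb_coord. Qed.

Lemma sgn0 : sgn K 0 = 1. Proof. by []. Qed.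
Lemma sgn1 : sgn K 1 = -1. Proof. by rewrite /sgn expr1. Qed.
Lemma sgnD a b : sgn K (a + b) = sgn K a * sgn K b.
Proof. by rewrite /sgn exprD. Qed.
Lemma sgnK a : sgn K a * sgn K a = 1.
Proof. by rewrite /sgn -expr2 sqrr_sign. Qed.

Lemma cross0s (T : {set 'I_n.-1}) : cross set0 T = 0%N.
Proof. by apply/eqP; rewrite cards_eq0; apply/eqP/setP => p; rewrite !inE. Qed.

Lemma crosss0 (T : {set 'I_n.-1}) : cross T set0 = 0%N.
Proof. by apply/eqP; rewrite cards_eq0; apply/eqP/setP => p; rewrite !inE andbF. Qed.

Lemma cross11 (i j : 'I_n.-1) : cross [set i] [set j] = (j < i)%N.
Proof.
rewrite /cross (_ : [set _ | _] = if (j < i)%N then [set (i, j)] else set0).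
  by case: ifP; rewrite ?cards1 ?cards0.
apply/setP => -[a b]; rewrite !inE /=.
by case: ifP => ji; rewrite ?inE ?xpair_eqE; case: (a =P i) => [->|];
   case: (b =P j) => [->|]; rewrite ?ji.
Qed.

Lemma hbmul1l (v : I) : hbmul K (false, set0) v = hb K v.
Proof.
case: v => d R; rewrite /hbmul /= -setI_eq0 set0I eqxx cards0 muln0 cross0s sgn0.
by rewrite scale1r set0U.
Qed.

Lemma hbmul_gl d (R : {set 'I_n.-1}) : hbmul K (true, set0) (d, R) = hb K (~~ d, R).
Proof. by rewrite /hbmul /= -setI_eq0 set0I eqxx cards0 muln0 cross0s sgn0 scale1r set0U. Qed.

Lemma hbmul_xl c (j : 'I_n.-1) d (R : {set 'I_n.-1}) : hbmul K (c, [set j]) (d, R) =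
  if j \in R then 0 else sgn K (d + cross [set j] R) *: hb K (c (+) d, j |: R).
Proof. by rewrite /hbmul /= disjoints1 cards1 muln1; case: (j \in R). Qed.

Lemma hmul1l (k : H) : hmul (hb K (false, set0)) k = k.
Proof.
by rewrite hmul_hbl [RHS]hn_expand; apply: eq_bigr => v _; rewrite hbmul1l.
Qed.

Definition hsumb (V : lmodType K) (u : I) (F : H -> H -> V) : V :=
  \sum_(T in powerset u.2)
     sgn K (cross T (u.2 :\: T)) *:
       F (hb K (u.1 (+) odd #|T|, u.2 :\: T)) (hb K (u.1, T)).

Lemma hsumE (V : lmodType K) (h : H) (F : H -> H -> V) :
  hsum h F = \sum_u h u *: hsumb u F.
Proof.
apply: eq_bigr => u _; rewrite scaler_sumr; apply: eq_bigr => T _.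
by rewrite scalerA.
Qed.

Lemma hsum_hb (V : lmodType K) (u : I) (F : H -> H -> V) :
  hsum (hb K u) F = hsumb u F.
Proof. by rewrite hsumE sum_hb_coord. Qed.

Lemma hsumb_grouplike (V : lmodType K) c (F : H -> H -> V) :
  hsumb (c, set0) F = F (hb K (c, set0)) (hb K (c, set0)).
Proof.
rewrite /hsumb powerset0 big_set1 /= cross0s sgn0 scale1r.
by rewrite cards0 addbF setD0.
Qed.

Lemma hsumb_skewprim (V : lmodType K) c i (F : H -> H -> V) :
  hsumb (c, [set i]) F = F (hb K (c, [set i])) (hb K (c, set0))
                       + F (hb K (~~ c, set0)) (hb K (c, [set i])).
Proof.
rewrite /hsumb powerset1 big_setU1 ?big_set1 /=; last first.
  by rewrite inE eq_sym; apply/set0Pn; exists i; rewrite inE.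
by rewrite setD0 setDv cross0s crosss0 sgn0 !scale1r cards0 cards1 addbF addbT.
Qed.

Lemma hsumb_mulr (R : algType K) u (F : H -> H -> R) a :
  hsumb u (fun h1 h2 => F h1 h2 * a) = hsumb u F * a.
Proof. by rewrite /hsumb mulr_suml; apply: eq_bigr => T _; rewrite scalerAl. Qed.

End NicholsBasis.

Section PartialAction.
Variables (K : fieldType) (n : nat) (A : algType K) (act : Hn K n -> A -> A).
Hypothesis PA : partial_action act.
Local Notation H := (Hn K n).

Lemma actDl h1 h2 a : act (h1 + h2) a = act h1 a + act h2 a.
Proof. by have [[L _] _ _ _] := PA; have := L 1 h1 h2 a; rewrite !scale1r. Qed.

Lemma act0l a : act 0 a = 0.
Proof. by apply: (addrI (act 0 a)); rewrite -actDl !addr0. Qed.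

Lemma actZl c h a : act (c *: h) a = c *: act h a.
Proof. by have [[L _] _ _ _] := PA; rewrite -[c *: h]addr0 L act0l addr0. Qed.

Lemma actDr h a b : act h (a + b) = act h a + act h b.
Proof. by have [[_ L] _ _ _] := PA; have := L 1 h a b; rewrite !scale1r. Qed.

Lemma act0r h : act h 0 = 0.
Proof. by apply: (addrI (act h 0)); rewrite -actDr !addr0. Qed.

Lemma act_suml (J : finType) (c : J -> K) (m : J -> H) a :
  act (\sum_j c j *: m j) a = \sum_j c j *: act (m j) a.
Proof.
elim/big_rec2: _ => [|j x y _ <-]; first by rewrite act0l.
by rewrite actDl actZl.
Qed.

Lemma act_expand h a : act h a = \sum_u h u *: act (hb K u) a.
Proof. by rewrite {1}(hn_expand h) act_suml. Qed.

Lemma act1l a : act (hb K (false, set0)) a = a.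
Proof. by have [_ P1 _ _] := PA; apply: P1. Qed.

Lemma act_mul_hb u a b :
  act (hb K u) (a * b) = hsumb u (fun h1 h2 => act h1 a * act h2 b).
Proof. by have [_ _ P2 _] := PA; rewrite P2 hsum_hb. Qed.

Lemma act_act_hb u k a :
  act (hb K u) (act k a) = hsumb u (fun h1 h2 => act h1 1 * act (hmul h2 k) a).
Proof. by have [_ _ _ P3] := PA; rewrite P3 hsum_hb. Qed.

Lemma symmetric_on_hb :
  (forall u k a, act (hb K u) (act k a) =
     hsumb u (fun h1 h2 => act (hmul h1 k) a * act h2 1)) ->
  symmetric_partial_action act.
Proof. by move=> symb h k a; rewrite hsumE act_expand; apply: eq_bigr => u _; rewrite symb. Qed.

End PartialAction.

Section GlobalCase.
Variables (K : fieldType) (n : nat) (A : algType K) (act : Hn K n -> A -> A).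
Hypothesis PA : partial_action act.
Hypothesis g1 : act (hb K (true, set0)) 1 = 1.

Lemma act_x1_eq0 (i : 'I_n.-1) : act (hb K (false, [set i])) 1 = 0.
Proof.
set f := act _ 1; have := act_mul_hb PA (false, [set i]) 1 1.
rewrite hsumb_skewprim /= (act1l PA) g1 !mulr1 mul1r => ff.
by apply: (addrI f); rewrite addr0 [RHS]ff.
Qed.

Lemma act_hmul_x (i : 'I_n.-1) k a :
  act (hmul (hb K (false, [set i])) k) a = act (hb K (false, [set i])) (act k a).
Proof. by rewrite (act_act_hb PA) hsumb_skewprim /= act_x1_eq0 mul0r add0r g1 mul1r. Qed.

Lemma act_hmul_g k a :
  act (hmul (hb K (true, set0)) k) a = act (hb K (true, set0)) (act k a).
Proof. by rewrite (act_act_hb PA) hsumb_grouplike g1 mul1r. Qed.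

Lemma act_hb1_counit (u : Hidx n) : act (hb K u) 1 = (u.2 == set0)%:R.
Proof.
have act_hx1 U : act (hb K (false, U)) 1 = (U == set0)%:R.
  have [m] := ubnP #|U|; elim: m U => // m IH U ltUm.
  have [->|[i iU]] := set_0Vmem U; first by rewrite eqxx (act1l PA).
  have iR : i \notin U :\ i by rewrite setD11.
  have -> : hb K (false, U) = sgn K (cross [set i] (U :\ i)) *:
                               hmul (hb K (false, [set i])) (hb K (false, U :\ i)).
    by rewrite hmul_hb hbmul_xl (negbTE iR) scalerA sgnK scale1r setD1K.
  rewrite (actZl PA) act_hmul_x IH; last by rewrite (cardsD1 i U) iU in ltUm.
  have -> : (U == set0) = false by apply/negbTE/set0Pn; exists i.
  by case: (_ == _); rewrite ?act_x1_eq0 ?(act0r PA) scaler0.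
case: u => [[] U]; last exact: act_hx1.
have -> : hb K (true, U) = hmul (hb K (true, set0)) (hb K (false, U)).
  by rewrite hmul_hb hbmul_gl.
by rewrite act_hmul_g act_hx1 /=; case: (_ == _); rewrite ?g1 ?(act0r PA).
Qed.

Lemma symmetric_of_g1 : symmetric_partial_action act.
Proof.
apply: (symmetric_on_hb PA) => -[c S] k a; rewrite (act_act_hb PA).
transitivity (act (hmul (hb K (c, S)) k) a).
  rewrite /hsumb (bigD1 S) /= ?powersetE // big1 ?addr0.
    by rewrite setDv crosss0 sgn0 scale1r act_hb1_counit /= eqxx mul1r.
  move=> T /andP[]; rewrite powersetE => TS TnS.
  have SnT : ~~ (S \subset T).
    by apply: contraNN TnS => ST; rewrite eqEsubset TS ST.
  by rewrite act_hb1_counit /= setD_eq0 (negbTE SnT) mul0r scaler0.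
rewrite /hsumb (bigD1 set0) /= ?powersetE ?sub0set // big1 ?addr0.
  by rewrite cross0s sgn0 scale1r setD0 cards0 addbF act_hb1_counit /= eqxx mulr1.
by move=> T /andP[_ T0]; rewrite act_hb1_counit /= (negbTE T0) mulr0 scaler0.
Qed.

End GlobalCase.

Section ScalarCase.
Variables (K : fieldType) (n : nat) (A : algType K) (act : Hn K n -> A -> A).
Hypothesis PA : partial_action act.
Hypothesis g0 : act (hb K (true, set0)) 1 = 0.
Local Notation f i := (act (hb K (false, [set i])) 1).
Hypothesis f_central : forall i : 'I_n.-1, central (f i).
Local Notation y i := (act (hb K (true, [set i])) 1).
Local Notation I := (Hidx n).
Local Notation H := (Hn K n).

Lemma act_g a : act (hb K (true, set0)) a = 0.
Proof. by rewrite -{1}(act1l PA a) (act_act_hb PA) hsumb_grouplike g0 mul0r. Qed.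

Lemma act_gx (i : 'I_n.-1) a : act (hb K (true, [set i])) a = a * y i.
Proof.
have := act_mul_hb PA (true, [set i]) a 1.
by rewrite mulr1 hsumb_skewprim /= g0 mulr0 add0r (act1l PA).
Qed.

Lemma act_act_gx (i : 'I_n.-1) (k : H) a : act k a * y i =
  y i * act (hmul (hb K (true, set0)) k) a + act (hmul (hb K (true, [set i])) k) a.
Proof. by rewrite -act_gx (act_act_hb PA) hsumb_skewprim /= (act1l PA) mul1r. Qed.

Lemma act_x_gx1 (i : 'I_n.-1) a : act (hb K (false, [set i])) a = y i * a.
Proof.
have := act_act_gx i (hb K (true, set0)) a.
rewrite act_g mul0r !hmul_hb hbmul_gl hbmul_xl in_set0 crosss0 addn0 sgn1 /=.
rewrite setU0 (act1l PA) (actZl PA) scaleN1r => /esym/eqP.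
by rewrite subr_eq0 => /eqP.
Qed.

Lemma act_gx1 (i : 'I_n.-1) : y i = f i.
Proof. by rewrite act_x_gx1 mulr1. Qed.

Lemma act_hb_setU1 c (i : 'I_n.-1) (R : {set 'I_n.-1}) a : i \notin R ->
  act (hb K (c, i |: R)) a = sgn K (cross [set i] R) *:
     (f i * (act (hb K (false, R)) a - act (hb K (true, R)) a)).
Proof.
move=> iR; have := act_act_gx i (hb K (~~ c, R)) a.
rewrite !hmul_hb hbmul_gl hbmul_xl (negbTE iR) negbK (actZl PA) addTb negbK !act_gx1.
move=> gxR.
have : sgn K (~~ c + cross [set i] R) *: act (hb K (c, i |: R)) a =
       f i * (act (hb K (~~ c, R)) a - act (hb K (c, R)) a).
  by rewrite mulrBr (f_central i (act (hb K (~~ c, R)) a)) gxR addrC addKr.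
move=> e; rewrite -[LHS]scale1r -(sgnK K (~~ c + cross [set i] R)) -scalerA e.
case: c {gxR e} => /=; first by rewrite add0n.
by rewrite sgnD sgn1 mulN1r scaleNr -scalerN -mulrN opprB.
Qed.

Lemma act_hb_set1 c (i : 'I_n.-1) a : act (hb K (c, [set i])) a = f i * a.
Proof.
have := @act_hb_setU1 c i set0 a; rewrite in_set0 setU0 crosss0 sgn0 scale1r => -> //.
by rewrite (act1l PA) act_g subr0.
Qed.

Lemma act_hb_nonempty c (U : {set 'I_n.-1}) a : U != set0 ->
  act (hb K (c, U)) a = act (hb K (false, U)) a.
Proof.
case/set0Pn => i iU; rewrite -(setD1K iU).
by rewrite (act_hb_setU1 c) ?setD11 // (act_hb_setU1 false) ?setD11.
Qed.

Lemma act_hb_card_gt1 c (U : {set 'I_n.-1}) a : (1 < #|U|)%N ->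
  act (hb K (c, U)) a = 0.
Proof.
move=> U_gt1; have /set0Pn[i iU] : U != set0 by rewrite -card_gt0 ltnW.
have R0 : U :\ i != set0 by rewrite -card_gt0; move: U_gt1; rewrite (cardsD1 i U) iU.
rewrite -(setD1K iU) act_hb_setU1 ?setD11 //.
by rewrite (act_hb_nonempty true _ R0) subrr mulr0 scaler0.
Qed.

Lemma act_hb_scalar (u : I) a : act (hb K u) a = act (hb K u) 1 * a.
Proof.
case: u => c U; case: (set0_set1_or_card_gt1 U) => [->|[i ->]|U_gt1].
- by case: c; rewrite ?act_g ?mul0r // !(act1l PA) mul1r.
- by rewrite (act_hb_set1 c i 1) (act_hb_set1 c i a) mulr1.
- by rewrite !act_hb_card_gt1 // mul0r.
Qed.

Lemma act_scalar (m : H) a : act m a = act m 1 * a.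
Proof.
rewrite (act_expand PA m a) (act_expand PA m 1) mulr_suml; apply: eq_bigr => u _.
by rewrite -scalerAl act_hb_scalar.
Qed.

Lemma act1_central (m : H) : central (act m 1).
Proof.
move=> b; rewrite (act_expand PA m 1) mulr_suml mulr_sumr; apply: eq_bigr => -[c U] _.
rewrite -scalerAl -scalerAr; congr (_ *: _).
case: (set0_set1_or_card_gt1 U) => [->|[i ->]|U_gt1].
- by case: c; rewrite ?act_g ?mul0r ?mulr0 // !(act1l PA) mul1r mulr1.
- by rewrite act_hb_set1 mulr1 f_central.
- by rewrite !act_hb_card_gt1 // mul0r mulr0.
Qed.

Lemma act_hmul_card_gt1 c (U : {set 'I_n.-1}) (k : H) : (1 < #|U|)%N ->
  act (hmul (hb K (c, U)) k) 1 = 0.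
Proof.
move=> U_gt1; rewrite hmul_hbl (act_suml PA) big1 // => -[d R] _.
rewrite /hbmul /=; case: ifP => _; last by rewrite (act0l PA) scaler0.
rewrite (actZl PA) act_hb_card_gt1 ?scaler0 //.
exact: leq_trans U_gt1 (subset_leq_card (subsetUl U R)).
Qed.

Lemma act_hmul_x1 c (j : 'I_n.-1) (k : H) : act (hmul (hb K (c, [set j])) k) 1 =
  f j * (act k 1 - act (hmul (hb K (true, set0)) k) 1).
Proof.
rewrite hmul_hbl (act_suml PA) [act k 1](act_expand PA) hmul_hbl (act_suml PA).
rewrite -sumrB mulr_sumr; apply: eq_bigr => -[d R] _.
rewrite -scalerBr -scalerAr; congr (_ *: _).
rewrite hbmul_gl hbmul_xl; have [jR|jNR] := boolP (j \in R).
  have R0 : R != set0 by apply/set0Pn; exists j.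
  by rewrite (act0l PA) !(act_hb_nonempty _ _ R0) subrr mulr0.
rewrite (actZl PA); have [->|R0] := eqVneq R set0.
  rewrite setU0 crosss0 addn0 (act_hb_set1 (c (+) d)) mulr1.
  case: d; rewrite /= (act1l PA) act_g.
    by rewrite sgn1 scaleN1r sub0r mulrN1.
  by rewrite sgn0 scale1r subr0 mulr1.
rewrite (@act_hb_card_gt1 (c (+) d) (j |: R)) ?scaler0; last first.
  by rewrite cardsU1 jNR add1n ltnS card_gt0.
by rewrite !(act_hb_nonempty _ _ R0) subrr mulr0.
Qed.

Local Notation sym_sum u k := (hsumb u (fun h1 h2 => act (hmul h1 k) 1 * act h2 1)).

Lemma sym_summand_eq0 c (S T : {set 'I_n.-1}) (k : H) :
  ((1 < #|T|) || (1 < #|S :\: T|))%N ->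
  act (hmul (hb K (c (+) odd #|T|, S :\: T)) k) 1 * act (hb K (c, T)) 1 = 0.
Proof.
case/orP => [T_gt1|D_gt1]; first by rewrite act_hb_card_gt1 // mulr0.
by rewrite act_hmul_card_gt1 // mul0r.
Qed.

Lemma sym_sum_set2 c (i j : 'I_n.-1) (k : H) : i != j -> sym_sum (c, [set i; j]) k = 0.
Proof.
move=> ij; rewrite /hsumb (bigD1 [set i]) /=; last by rewrite powersetE sub1set !inE eqxx.
rewrite (bigD1 [set j]) /=; last first.
  by rewrite powersetE sub1set !inE eqxx orbT (inj_eq set1_inj) eq_sym.
rewrite big1 ?addr0; last first.
  move=> T /andP[/andP[TS Ti] Tj]; rewrite sym_summand_eq0 ?scaler0 //.
  case: (set0_set1_or_card_gt1 T) => [->|[x Tx]|->] //; first by rewrite setD0 cards2 ij orbT.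
  move: TS Ti Tj; rewrite Tx powersetE sub1set !inE !(inj_eq set1_inj).
  by case/orP => /eqP ->; rewrite eqxx.
rewrite setU1K ?inE // setUC setU1K ?inE 1?eq_sym // !cards1 /= !addbT.
rewrite (act_hmul_x1 (~~ c) j k) (act_hmul_x1 (~~ c) i k).
rewrite (act_hb_set1 c i 1) (act_hb_set1 c j 1) !mulr1 !cross11.
set X := act k 1 - _.
have -> : f j * X * f i = f i * X * f j.
  by rewrite -mulrA -(f_central i X) mulrA (f_central j (f i)) -mulrA (f_central j X) mulrA.
rewrite -scalerDl; case: (ltngtP i j) => [_|_|/val_inj eq_ij].
- by rewrite sgn0 sgn1 addrN scale0r.
- by rewrite sgn0 sgn1 addNr scale0r.
- by rewrite eq_ij eqxx in ij.
Qed.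

Lemma sym_sum_card_gt2 c (S : {set 'I_n.-1}) (k : H) : (2 < #|S|)%N ->
  sym_sum (c, S) k = 0.
Proof.
move=> S_gt2; rewrite /hsumb big1 // => T; rewrite powersetE => TS.
rewrite sym_summand_eq0 ?scaler0 // (cardsDS TS); case: (ltnP 1 #|T|) => //= T_le1.
by rewrite ltn_subRL; apply: leq_trans S_gt2; rewrite addn1 !ltnS.
Qed.

Lemma sym_sum_act1 (u : I) (k : H) : sym_sum u k = act (hb K u) 1 * act k 1.
Proof.
case: u => c S; case: (set0_set1_or_card_gt1 S) => [->|[i ->]|S_gt1].
- rewrite hsumb_grouplike; case: c; first by rewrite g0 mulr0 mul0r.
  by rewrite hmul1l (act1l PA) mulr1 mul1r.
- rewrite hsumb_skewprim /= act_hmul_x1; case: c => /=.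
    rewrite g0 mulr0 add0r hmul1l (act_hb_set1 true i 1) mulr1.
    by rewrite f_central.
  by rewrite (act1l PA) mulr1 mulrBr -f_central subrK.
rewrite act_hb_card_gt1 // mul0r.
have [/eqP/cards2P[i [j [ij ->]]]|S_ne2] := eqVneq #|S| 2; first exact: sym_sum_set2.
by apply: sym_sum_card_gt2; rewrite ltn_neqAle eq_sym S_ne2.
Qed.

Lemma symmetric_of_g0 : symmetric_partial_action act.
Proof.
apply: (symmetric_on_hb PA) => u k a.
rewrite act_scalar (act_scalar k a) mulrA.
rewrite -sym_sum_act1 -hsumb_mulr; apply: eq_bigr => T _; congr (_ *: _).
rewrite [in RHS]act_scalar -!mulrA; congr (_ * _).
exact: act1_central.
Qed.

End ScalarCase.

Unset Implicit Arguments.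

Theorem theorem4p5 (K : fieldType) (n : nat) (A : algType K)
    (act : Hn K n -> A -> A) :
  2 \notin [pchar K] -> (2 <= n)%N ->
  partial_action act ->
  (act (Hg K n) 1 = 1 \/
   (act (Hg K n) 1 = 0 /\ forall i : 'I_n.-1, central (act (Hx K i) 1))) ->
  symmetric_partial_action act.
Proof.
move=> _ _ PA [g1 | [g0 x1_central]].
- exact: symmetric_of_g1 PA g1.
- exact: symmetric_of_g0 PA g0 x1_central.
Qed.
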